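(* There exist constants $c>0$ and $K>0$ such that for every positive integer $n$ there exists a divisor $m$ of $n$ with $m\ge n^{c/\log\log\log n}$ and $\sigma(m)\le K m$.
   Context: $\sigma(m)$ is the sum of the positive divisors of $m$. Convention: $\log x$ denotes $\max(\ln x,1)$. *)

From Stdlib Require Import Reals Arith List.
Import ListNotations.
Open Scope R_scope.

(* sigma m = sum of the positive divisors of m (sigma 0 = 0 by convention). *)
Definition sigma_div (m : nat) : nat :=
  fold_right Nat.add 0%nat
    (filter (fun d => Nat.eqb (Nat.modulo m d) 0) (seq 1 m)).

(* Paper convention: log x denotes max(ln x, 1). *)
Definition plog (x : R) : R := Rmax (ln x) 1.

(* Group the primes p by the class min(⌊log2 ⌊log2 p⌋⌋, J), where J is about
   6 log log log n. Since n is the product of its J + 1 class parts, one part m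
   satisfies n <= m^(J+1). Its abundancy sigma(m)/m is at most
   prod_(p | m) p/(p-1) <= exp (sum_(p | m) 1/(p-1)). In a class c < J the primes
   satisfy 2^c <= ⌊log2 p⌋ < 2^(c+1), and Chebyshev's estimate (the primes of
   (2^k, 2^(k+1)] divide the central binomial coefficient) bounds the sum by 10.
   In the last class every prime exceeds L = 2^(2^J) > log2 n, so fewer than L of
   them divide n and the sum is at most 1. *)

From Stdlib Require Import Reals Arith List Lra Lia ZArith.
From mathcomp Require Import all_boot all_order all_algebra.
From mathcomp Require Import Rstruct zify.
Set Implicit Arguments. Unset Strict Implicit. Unset Printing Implicit Defensive.
Close Scope R_scope.

(** * Sum of divisors *)

Definition sigman (m : nat) : nat := \sum_(d < m.+1 | d %| m) d.

Lemma modn_modulo m d : 0 < d -> Nat.modulo m d = m %% d.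
Proof.
move=> d0; symmetry; apply: (Nat.mod_unique m d (m %/ d)).
  by apply/ltP; rewrite ltn_pmod.
by rewrite {1}(divn_eq m d) Nat.mul_comm -multE -plusE.
Qed.

Lemma sigma_divE m : 0 < m -> sigma_div m = sigman m.
Proof.
move=> m0.
have sum_seq s k : 0 < s ->
    fold_right Nat.add 0
      (List.filter (fun d => Nat.eqb (Nat.modulo m d) 0) (List.seq s k))
    = \sum_(d <- iota s k | d %| m) d.
  elim: k s => [|k IH] s s0; first by rewrite big_nil.
  rewrite /= big_cons modn_modulo // /dvdn.
  by case: (m %% s) => [|r] /=; rewrite IH.
rewrite /sigma_div sum_seq // /sigman -(big_mkord (fun d => d %| m) id).
by rewrite /index_iota subn0 big_cons dvd0n; case: m m0 {sum_seq}.
Qed.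

Lemma leq_sum_inj (I J : finType) (A : {pred I}) (B : {pred J}) (h : I -> J)
    (F : J -> nat) :
  {in A &, injective h} -> {in A, forall i, h i \in B} ->
  \sum_(i in A) F (h i) <= \sum_(j in B) F j.
Proof.
move=> inj hAB; rewrite -(big_imset _ inj).
rewrite (bigID (fun j => j \in [set h x | x in A]) (fun j => j \in B)) /=.
apply: leq_trans (leq_addr _ _).
rewrite [X in _ <= X](eq_bigl (fun j => j \in [set h x | x in A])) //.
move=> j; apply/andP/idP => [[]//|jin]; split=> //.
by case/imsetP: jin => i iA ->; apply: hAB.
Qed.

Lemma dvdn_mul_coprime_gcd a b d : coprime a b -> d %| a * b ->
  d = gcdn d a * gcdn d b.
Proof.
move=> cab dab; apply/eqP; rewrite eqn_dvd; apply/andP; split.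
  have dMb : d %| gcdn d a * b by rewrite muln_gcdl dvdn_gcd dvdn_mulr.
  have : d %| gcdn (gcdn d a * b) (gcdn d a * d) by rewrite dvdn_gcd dMb dvdn_mull.
  by rewrite -muln_gcdr [gcdn b d]gcdnC.
have cg : coprime (gcdn d a) (gcdn d b).
  exact: coprime_dvdl (dvdn_gcdr d a) (coprime_dvdr (dvdn_gcdr d b) cab).
by rewrite Gauss_dvd // !dvdn_gcdl.
Qed.

(* The divisor d of a * b is sent to the pair (gcd d a, gcd d b), injectively. *)
Lemma sigmanM_le a b : 0 < a -> 0 < b -> coprime a b ->
  sigman (a * b) <= sigman a * sigman b.
Proof.
move=> a0 b0 cab; rewrite /sigman big_distrl /=.
under [X in _ <= X]eq_bigr do rewrite big_distrr.
rewrite pair_big /=.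
pose h (d : 'I_(a * b).+1) : 'I_a.+1 * 'I_b.+1 :=
  (inord (gcdn d a), inord (gcdn d b)).
have hE (d : 'I_(a * b).+1) :
    ((h d).1 : nat) = gcdn d a /\ ((h d).2 : nat) = gcdn d b.
  by rewrite /h /= !inordK // ltnS; apply: dvdn_leq => //; apply: dvdn_gcdr.
have dE (d : 'I_(a * b).+1) : d %| a * b -> (d : nat) = (h d).1 * (h d).2.
  by move=> dd; have [-> ->] := hE d; apply: dvdn_mul_coprime_gcd.
rewrite (eq_bigr (fun d => (fun x : 'I_a.+1 * 'I_b.+1 => x.1 * x.2 : nat) (h d)));
  last by move=> d dd; rewrite -dE.
apply: (leq_sum_inj (A := [pred d : 'I_(a * b).+1 | d %| a * b])
  (B := [pred x : 'I_a.+1 * 'I_b.+1 | (x.1 %| a) && (x.2 %| b)])).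
  move=> d1 d2; rewrite !inE => d1d d2d eqh; apply: val_inj => /=.
  by rewrite (dE _ d1d) (dE _ d2d) eqh.
by move=> d _; rewrite inE; have [-> ->] := hE d; rewrite !dvdn_gcdr.
Qed.

Lemma sigman_pfactor_lt p k : prime p -> sigman (p ^ k) * p.-1 < p ^ k.+1.
Proof.
move=> pp; have p0 := prime_gt0 pp.
have sigma_le : sigman (p ^ k) <= \sum_(i < k.+1) p ^ i.
  pose h (d : 'I_(p ^ k).+1) : 'I_k.+1 := inord (logn p d).
  have dE (d : 'I_(p ^ k).+1) : d %| p ^ k -> (d : nat) = p ^ h d.
    by move/(dvdn_pfactor _ _ pp) => [m mk md]; rewrite /h md pfactorK // inordK.
  rewrite /sigman (eq_bigr (fun d => (fun i : 'I_k.+1 => p ^ i) (h d)));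
    last by move=> d dd; rewrite -dE.
  apply: (leq_sum_inj (A := [pred d : 'I_(p ^ k).+1 | d %| p ^ k]) (B := predT)) => //.
  move=> d1 d2; rewrite !inE => d1d d2d eqh; apply: val_inj => /=.
  by rewrite (dE _ d1d) (dE _ d2d) eqh.
apply: (@leq_ltn_trans ((\sum_(i < k.+1) p ^ i) * p.-1)); first exact: leq_mul.
rewrite mulnC -predn_exp.
have : 0 < p ^ k.+1 by rewrite expn_gt0 p0.
by case: (p ^ k.+1).
Qed.

Lemma big_nat_recr_cond (R : Type) (idx : R) (op : Monoid.law idx) (P : pred nat)
    (F : nat -> R) b :
  \big[op/idx]_(0 <= i < b.+1 | P i) F i =
  op (\big[op/idx]_(0 <= i < b | P i) F i) (if P b then F b else idx).
Proof. by rewrite big_mkcond big_nat_recr //= -big_mkcond. Qed.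

Lemma logn_gt0_prime p n : 0 < logn p n -> prime p /\ p %| n.
Proof. by rewrite logn_gt0 mem_primes => /and3P[]. Qed.

Section SigmaPartn.
Variables (n : nat) (pi : nat_pred).

Local Notation in_pi_dvd p := ((p%N \in pi) && (0 < logn p n)).
Local Notation part b := (\prod_(0 <= p < b | p \in pi) p ^ logn p n).

Lemma sigman_part_le b :
  sigman (part b) * \prod_(0 <= p < b | in_pi_dvd p) p.-1
    <= part b * \prod_(0 <= p < b | in_pi_dvd p) p.
Proof.
elim: b => [|b IH].
  by rewrite !big_geq //= /sigman big_mkcond (big_ord_recr 1) big_ord_recr big_ord0.
rewrite !big_nat_recr_cond.
case qb: (in_pi_dvd b); last first.
  case pb: (b \in pi); last by rewrite /= !muln1.
  move: qb; rewrite pb /= => /negbT; rewrite -leqNgt leqn0 => /eqP ->.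
  by rewrite expn0 !muln1.
have /andP[pb eb] := qb; rewrite pb.
have [pr _] := logn_gt0_prime eb.
set e := logn b n; set M := part b.
set D := \prod_(0 <= i < b | in_pi_dvd i) i.-1.
set U := \prod_(0 <= i < b | in_pi_dvd i) i.
have M0 : 0 < M.
  by apply: prodn_gt0 => -[|p] //= _; rewrite expn_gt0; case: (logn 0 n).
have be0 : 0 < b ^ e by rewrite expn_gt0 prime_gt0.
have cop : coprime M (b ^ e).
  rewrite coprime_pexpr // coprime_sym prime_coprime // Euclid_dvd_prod //.
  rewrite big_seq_cond big1_idem // => i /andP[ipi _].
  rewrite Euclid_dvdX //; apply/negbTE; rewrite negb_and.
  case: (posnP (logn i n)) => [_ | ei]; first by rewrite orbT.
  have [pri _] := logn_gt0_prime ei.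
  rewrite dvdn_prime2 //; apply/orP; left.
  by move: ipi; rewrite mem_index_iota => /andP[_ ib]; rewrite gtn_eqF.
apply: (@leq_trans (sigman M * sigman (b ^ e) * (D * b.-1))).
  by rewrite leq_mul2r sigmanM_le ?orbT.
rewrite mulnACA [M * b ^ e * _]mulnACA.
by apply: leq_mul => //; rewrite -expnSr ltnW ?sigman_pfactor_lt.
Qed.

Lemma sigman_partn_le :
  sigman n`_pi * \prod_(0 <= p < n.+1 | in_pi_dvd p) p.-1
    <= n`_pi * \prod_(0 <= p < n.+1 | in_pi_dvd p) p.
Proof. exact: sigman_part_le. Qed.

End SigmaPartn.

(** * Prime classes and Chebyshev's estimate *)

Definition class_of (cl : nat -> nat) (c : nat) : nat_pred := [pred p | cl p == c].

Lemma prod_class_partn n J (cl : nat -> nat) : 0 < n -> (forall p, cl p <= J) ->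
  n = \prod_(c < J.+1) n`_(class_of cl c).
Proof.
move=> n0 clJ; rewrite -{1}(partnT n0) /partn.
rewrite (eq_bigr (fun p => \prod_(c < J.+1 | cl p == c) p ^ logn p n)); last first.
  move=> p _; rewrite (big_pred1 (inord (cl p) : 'I_J.+1)) //.
  by move=> c; rewrite /= -(inj_eq val_inj) /= inordK // ltnS.
by rewrite (exchange_big_dep predT).
Qed.

Lemma exists_class_partn_pow_ge n J (cl : nat -> nat) :
  0 < n -> (forall p, cl p <= J) ->
  exists c, n <= n`_(class_of cl c) ^ J.+1.
Proof.
move=> n0 clJ.
have J1 : 0 < #|'I_J.+1| by rewrite card_ord.
have [c0 maxE] := eq_bigmax (fun c : 'I_J.+1 => n`_(class_of cl c)) J1.
exists c0.
rewrite {1}(prod_class_partn n0 clJ) -maxE.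
apply: (@leq_trans (\prod_(c < J.+1) \max_(i < J.+1) n`_(class_of cl i))).
  by apply: leq_prod => c _; rewrite (bigD1 c) //= leq_maxl.
by rewrite prod_nat_const card_ord.
Qed.

Lemma prod_uniq_primes_dvd (s : seq nat) N : uniq s -> all prime s ->
  all (dvdn^~ N) s -> \prod_(p <- s) p %| N.
Proof.
elim: s => [|p s IH] /=; first by rewrite big_nil dvd1n.
move=> /andP[ps us] /andP[pp ap] /andP[pN aN].
rewrite big_cons Gauss_dvd ?pN ?IH //.
rewrite prime_coprime // Euclid_dvd_prod // big_seq_cond big1_idem // => q /andP[qs _].
have pq : prime q by move/allP: ap; apply.
by rewrite dvdn_prime2 //; apply/negbTE; apply: contra ps => /eqP ->.
Qed.

Lemma leq_pow_size_prod (s : seq nat) m : {in s, forall p, m <= p} ->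
  m ^ size s <= \prod_(p <- s) p.
Proof.
elim: s => [|x s IH] ms; first by rewrite big_nil.
rewrite big_cons /= expnS leq_mul ?ms ?mem_head // IH // => p ps.
by apply: ms; rewrite inE ps orbT.
Qed.

Lemma central_bin_le m : 'C(m.*2, m) <= 2 ^ m.*2.
Proof.
rewrite -[2]/(1 + 1) expnDn (bigD1 (inord m : 'I_m.*2.+1)) //= inordK;
  last by rewrite ltnS -addnn leq_addl.
by rewrite !exp1n !muln1 leq_addr.
Qed.

Lemma prime_ndvd_fact p m : prime p -> m < p -> ~~ (p %| m`!).
Proof.
move=> pp mp; rewrite fact_prod Euclid_dvd_prod // big_seq_cond.
rewrite big1_idem // => i /andP[]; rewrite mem_index_iota => /andP[i1 im] _.
by apply/negbTE; apply: contraTN isT => /(dvdn_leq i1); lia.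
Qed.

Lemma prime_dvd_central_bin m p : prime p -> m < p <= m.*2 -> p %| 'C(m.*2, m).
Proof.
move=> pp /andP[mp pm].
have : p %| (m.*2)`! by apply: dvdn_fact; rewrite pm (leq_trans _ mp).
rewrite -(bin_fact (_ : m <= m.*2)) -?addnn ?leq_addr // addnK.
by rewrite !Euclid_dvdM // orbb (negPf (prime_ndvd_fact pp mp)) orbF.
Qed.

(* Chebyshev: the primes of (2^k, 2^(k+1)] all divide 'C(2^(k+1), 2^k) <= 2^(2^(k+1)). *)
Lemma count_primes_dyadic (s : seq nat) k : uniq s ->
  k * count [pred p | prime p && (2 ^ k < p <= 2 ^ k.+1)] s <= 2 ^ k.+1.
Proof.
move=> us; set m := 2 ^ k.
have m2 : 2 ^ k.+1 = m.*2 by rewrite expnS mul2n.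
rewrite -size_filter m2.
set t := filter _ s.
have tdvd : \prod_(p <- t) p %| 'C(m.*2, m).
  apply: prod_uniq_primes_dvd; first exact: filter_uniq.
    by apply/allP => p; rewrite mem_filter => /andP[/andP[]].
  apply/allP => p; rewrite mem_filter => /andP[/andP[pp pI] _].
  by apply: prime_dvd_central_bin; rewrite // -m2.
have tle : \prod_(p <- t) p <= 2 ^ m.*2.
  apply: leq_trans (central_bin_le m); apply: dvdn_leq tdvd.
  by rewrite bin_gt0 -addnn leq_addr.
have tge : m ^ size t <= \prod_(p <- t) p.
  by apply: leq_pow_size_prod => p; rewrite mem_filter => /andP[/andP[_ /andP[/ltnW]]].
rewrite -(leq_exp2l _ _ (ltnSn 1)) expnM -/m.
exact: leq_trans tge tle.
Qed.

(* The primes with [trunc_log 2 p = k] are [2^k] (if prime) and those of a dyadic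
   interval; then [k + 2^(k+1) <= 5 (2^k - 1)]. *)
Lemma count_primes_trunc_log (s : seq nat) k : uniq s -> 0 < k ->
  k * count [pred p | prime p && (trunc_log 2 p == k)] s <= 5 * (2 ^ k).-1.
Proof.
move=> us k0.
set a1 := pred1 (2 ^ k).
set a2 := [pred p | prime p && (2 ^ k < p <= 2 ^ k.+1)].
have sub : subpred [pred p | prime p && (trunc_log 2 p == k)] (predU a1 a2).
  move=> p /andP[pp /eqP tk].
  have := trunc_log_bounds (ltnSn 1) (prime_gt0 pp); rewrite tk => /andP[h1 h2].
  rewrite /= pp /= eq_sym; case: eqP => //= ne.
  by rewrite ltn_neqAle h1 ltnW // !andbT; apply/eqP.
have c1 := sub_count sub s.
have c2 := count_predUI a1 a2 s.
have c3 : count a1 s <= 1 by rewrite (count_uniq_mem _ us); case: (_ \in _).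
have c4 := count_primes_dyadic k us.
have e1 : k + 5 <= 3 * 2 ^ k.
  elim: k k0 {sub c1 c2 c3 c4 a1 a2} => // -[|k] IH _ //.
  by rewrite expnS; have := IH isT; lia.
have e2 : 1 <= 2 ^ k by rewrite expn_gt0.
rewrite -/a2 expnS in c4.
apply: (@leq_trans (k * (count a1 s + count a2 s))); last by nia.
by rewrite leq_mul2l (leq_trans c1) ?orbT // -c2 leq_addr.
Qed.

(** * Reciprocal sums over a class of primes *)

Import Order.TTheory GRing.Theory Num.Theory.
Open Scope ring_scope.

Lemma exp_le (x y : R) : Rle x y -> Rle (exp x) (exp y).
Proof.
case/Rle_lt_or_eq_dec => [lt|->]; first exact/Rlt_le/exp_increasing.
exact: Rle_refl.
Qed.

Lemma prod1D_le_exp_sum (s : seq nat) (P : pred nat) (x : nat -> R) :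
  (forall p, 0 <= x p) ->
  \prod_(p <- s | P p) (1 + x p) <= exp (\sum_(p <- s | P p) x p).
Proof.
move=> x0; elim: s => [|a s IH]; first by rewrite !big_nil expR0.
rewrite !big_cons; case: (P a) => //.
rewrite -expRD; apply: ler_pM => //.
- by rewrite addr_ge0.
- by apply: prodr_ge0 => i _; rewrite addr_ge0.
- exact/RleP/exp_ineq1_le.
Qed.

Lemma ler_inv_nat (a b : nat) : (0 < a)%N -> (a <= b)%N -> (b%:R : R)^-1 <= (a%:R)^-1.
Proof.
by move=> a0 ab; rewrite lef_pV2 ?ler_nat // ?posrE ?ltr0n // (leq_trans a0).
Qed.

Lemma sumr_const_count (I : Type) (s : seq I) (P : pred I) (x : R) :
  \sum_(i <- s | P i) x = x *+ count P s.
Proof. by rewrite big_const_seq iter_addr_0. Qed.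

(* [p / (p - 1) = 1 + 1 / (p - 1)] and [1 + y <= exp y]. *)
Lemma prod_le_exp_prod_predn (s : seq nat) (P : pred nat) (C : R) :
  (forall p, P p -> (2 <= p)%N) ->
  \sum_(p <- s | P p) ((p.-1)%:R)^-1 <= C ->
  (\prod_(p <- s | P p) p)%:R <= exp C * (\prod_(p <- s | P p) p.-1)%:R :> R.
Proof.
move=> p2 sumC; rewrite !natr_prod.
rewrite (eq_bigr (fun p => (p.-1)%:R * (1 + ((p.-1)%:R)^-1))); last first.
  move=> p /p2 p_ge2.
  have q0 : (p.-1)%:R != 0 :> R by rewrite pnatr_eq0; case: p p_ge2 => [|[]].
  by rewrite mulrDr mulr1 mulfV // natr1 prednK // (leq_trans _ p_ge2).
rewrite big_split /= mulrC; apply: ler_wpM2r.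
  by apply: prodr_ge0 => i _; apply: ler0n.
apply: le_trans (prod1D_le_exp_sum _ _ _) _; last exact/RleP/exp_le/RleP.
by move=> p; rewrite invr_ge0 ler0n.
Qed.

Lemma sum_inv_predn_trunc_log_le (s : seq nat) (Q : pred nat) j : uniq s ->
  (0 < j)%N -> (forall p, Q p -> prime p) ->
  \sum_(p <- s | Q p && (trunc_log 2 p == j)) ((p.-1)%:R : R)^-1 <= 5%:R / j%:R.
Proof.
move=> us j0 Qprime.
set N := count [pred p | prime p && (trunc_log 2 p == j)] s.
have hD : (0 < (2 ^ j).-1)%N.
  have : (2 ^ 1 <= 2 ^ j)%N by rewrite leq_exp2l.
  by rewrite expn1; lia.
apply: (@le_trans _ _ (((2 ^ j).-1)%:R^-1 *+ N)).
  rewrite /N -sumr_const_count big_mkcond [X in _ <= X]big_mkcond /=.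
  apply: ler_sum => p _.
  case Qp: (Q p); case tp: (trunc_log 2 p == j); rewrite /= ?andbF //.
    have pp := Qprime _ Qp; rewrite pp; apply: ler_inv_nat => //.
    have := trunc_log_bounds (ltnSn 1) (prime_gt0 pp); rewrite (eqP tp).
    by case/andP => jp _; rewrite -!subn1 leq_sub2r.
  by case: (prime p); rewrite //= invr_ge0 ler0n.
have := count_primes_trunc_log us j0; rewrite -/N => cntN.
rewrite -(mulr_natl (((2^j).-1)%:R^-1) N) ler_pdivlMr ?ltr0n // mulrAC.
by rewrite ler_pdivrMr ?ltr0n // -!natrM ler_nat mulnC.
Qed.

Lemma sum_pred1_const (T : eqType) (s : seq T) (t : T) (x : R) : uniq s -> t \in s ->
  \sum_(j <- s | t == j) x = x.
Proof.
move=> us ts; rewrite sumr_const_count.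
have -> : count (fun j => t == j) s = count_mem t s.
  by apply: eq_count => j; rewrite eq_sym.
by rewrite count_uniq_mem // ts.
Qed.

(* Split according to [trunc_log 2 p], which ranges over [2^c, 2^(c+1)). *)
Lemma sum_inv_predn_class_le (s : seq nat) (Q : pred nat) (c : nat) : uniq s ->
  (forall p, Q p -> prime p && (trunc_log 2 (trunc_log 2 p) == c)) ->
  \sum_(p <- s | Q p) ((p.-1)%:R : R)^-1 <= 10%:R.
Proof.
move=> us hQ.
have tlQ p : Q p -> (2 ^ c <= trunc_log 2 p < 2 ^ c.+1)%N.
  case/hQ/andP => pp /eqP <-; apply: trunc_log_bounds => //.
  by rewrite trunc_log_gt0 /= prime_gt1.
rewrite (eq_bigr (fun p => \sum_(j <- index_iota 0 (2 ^ c.+1) | trunc_log 2 p == j)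
   ((p.-1)%:R : R)^-1)); last first.
  move=> p /tlQ /andP[_ tlc].
  by rewrite sum_pred1_const // ?iota_uniq // mem_index_iota.
rewrite (exchange_big_dep predT) //=.
apply: (@le_trans _ _ (\sum_(j <- index_iota 0 (2 ^ c.+1)) 5%:R / (2 ^ c)%:R)).
  apply: ler_sum => j _.
  case: (leqP (2 ^ c) j) => cj.
    have j0 : (0 < j)%N by apply: leq_trans cj; rewrite expn_gt0.
    have Qprime p : Q p -> prime p by case/hQ/andP.
    apply: le_trans (sum_inv_predn_trunc_log_le us j0 Qprime) _.
    apply: ler_wpM2l; first by rewrite ler0n.
    by apply: ler_inv_nat => //; rewrite expn_gt0.
  rewrite big1_seq; first by rewrite divr_ge0 ?ler0n.
  move=> p /andP[/andP[Qp /eqP tj] _].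
  by have /andP[] := tlQ p Qp; rewrite tj leqNgt cj.
rewrite sumr_const_count count_predT size_iota subn0 -(mulr_natr (5 / (2 ^ c)%:R)).
rewrite expnS natrM mulrCA divfK; last by rewrite pnatr_eq0 expn_eq0.
by rewrite -natrM.
Qed.

(* Fewer than [L] primes [p >= L] divide [n < 2^L]. *)
Lemma sum_inv_predn_large_le (s : seq nat) (Q : pred nat) n L : uniq s ->
  (2 <= L)%N -> (n < 2 ^ L)%N -> (0 < n)%N ->
  (forall p, Q p -> [&& prime p, p %| n & L <= p]%N) ->
  \sum_(p <- s | Q p) ((p.-1)%:R : R)^-1 <= 1.
Proof.
move=> us L2 nL n0 hQ.
apply: (@le_trans _ _ (\sum_(p <- s | Q p) ((L.-1)%:R : R)^-1)).
  apply: ler_sum => p /hQ /and3P[pp _ Lp].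
  by apply: ler_inv_nat; rewrite -!subn1 ?leq_sub2r // subn_gt0.
rewrite sumr_const_count -size_filter.
set t := filter Q s.
have tdvd : (\prod_(p <- t) p %| n)%N.
  apply: prod_uniq_primes_dvd; first exact: filter_uniq.
    by apply/allP => p; rewrite mem_filter => /andP[/hQ /and3P[]].
  by apply/allP => p; rewrite mem_filter => /andP[/hQ /and3P[]].
have tge : (L ^ size t <= \prod_(p <- t) p)%N.
  by apply: leq_pow_size_prod => p; rewrite mem_filter => /andP[/hQ /and3P[]].
have tL : (size t < L)%N.
  rewrite -(ltn_exp2l _ _ (ltnSn 1)); apply: leq_ltn_trans nL.
  apply: leq_trans (leq_trans tge (dvdn_leq n0 tdvd)).
  by case: (size t) => // k; rewrite leq_exp2r.
have L1 : (0 < L.-1)%N by rewrite -subn1 subn_gt0.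
apply: (@le_trans _ _ (((L.-1)%:R : R)^-1 *+ L.-1)).
  by rewrite ler_pMn2l ?invr_gt0 ?ltr0n // -ltnS prednK // ltnW.
by rewrite -(mulr_natr ((L.-1)%:R^-1)) mulVf // pnatr_eq0 -lt0n.
Qed.

Definition prime_class (J p : nat) : nat := minn (trunc_log 2 (trunc_log 2 p)) J.

Lemma sum_inv_predn_prime_class_le (s : seq nat) (Q : pred nat) n J c : uniq s ->
  (0 < n)%N -> (n < 2 ^ (2 ^ (2 ^ J)))%N ->
  (forall p, Q p -> [/\ prime p, (p %| n)%N & prime_class J p = c]) ->
  \sum_(p <- s | Q p) ((p.-1)%:R : R)^-1 <= 10%:R.
Proof.
move=> us n0 nL Qclass; case: (ltnP c J) => [cltJ | cgeJ].
  apply: (sum_inv_predn_class_le (c := c)) us _ => p /Qclass [-> _ clp] /=.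
  by apply/eqP; move: clp; rewrite /prime_class; lia.
have L2 : (2 <= 2 ^ (2 ^ J))%N by rewrite -{1}(expn1 2) leq_exp2l // expn_gt0.
apply: le_trans (sum_inv_predn_large_le us L2 nL n0 _) _; last by rewrite ler1n.
move=> p /Qclass [pp pn clp]; rewrite pp pn /=.
have tl_ge : (J <= trunc_log 2 (trunc_log 2 p))%N.
  by move: clp; rewrite /prime_class; lia.
have tl_gt0 : (0 < trunc_log 2 p)%N by rewrite trunc_log_gt0 /= prime_gt1.
have /andP[tl2 _] := trunc_log_bounds (ltnSn 1) tl_gt0.
have /andP[tl1 _] := trunc_log_bounds (ltnSn 1) (prime_gt0 pp).
apply: leq_trans tl1; rewrite leq_exp2l //; apply: leq_trans tl2.
by rewrite leq_exp2l.
Qed.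

Lemma exists_dvdn_pow_ge_sigman_le n J : (0 < n)%N -> (n < 2 ^ (2 ^ (2 ^ J)))%N ->
  exists m, [/\ (m %| n)%N, (n <= m ^ J.+1)%N &
    ((sigman m)%:R : R) <= exp 10%:R * m%:R].
Proof.
move=> n0 nL.
have classJ p : (prime_class J p <= J)%N by apply: geq_minr.
have [c n_le] := exists_class_partn_pow_ge n0 classJ.
set pi := class_of (prime_class J) c.
exists (n`_pi)%N; split => //; first exact: dvdn_part.
have := sigman_partn_le n pi.
set P := fun p => (p \in pi) && (0 < logn p n)%N.
set D := \prod_(0 <= p < n.+1 | P p) p.-1; set U := \prod_(0 <= p < n.+1 | P p) p.
move=> sigmaDU.
have Pclass p : P p -> [/\ prime p, (p %| n)%N & prime_class J p = c].
  by case/andP => /eqP clp /logn_gt0_prime[].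
have P_ge2 p : P p -> (2 <= p)%N by case/Pclass => /prime_gt1.
have UD := prod_le_exp_prod_predn P_ge2
  (sum_inv_predn_prime_class_le (iota_uniq 0 n.+1) n0 nL Pclass).
have D0 : (0 : R) < D%:R.
  rewrite ltr0n /D big_mkcond; apply: prodn_gt0 => p.
  by case: ifP => // /P_ge2; rewrite -subn1 subn_gt0.
rewrite -(ler_pM2r D0) -natrM.
apply: (@le_trans _ _ ((n`_pi)%N%:R * U%:R)); first by rewrite -natrM ler_nat.
by rewrite -mulrA mulrCA; apply: ler_wpM2l UD.
Qed.

Close Scope ring_scope.
Open Scope R_scope.

(** * Iterated logarithms *)

Lemma plog_ge1 x : 1 <= plog x.
Proof. exact: Rmax_r. Qed.

Lemma ln_le_plog x : ln x <= plog x.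
Proof. exact: Rmax_l. Qed.

Lemma le_exp_plog x : 0 < x -> x <= exp (plog x).
Proof.
by move=> x0; rewrite -{1}(exp_ln x x0); apply/exp_le/ln_le_plog.
Qed.

Lemma plog_mul_le a y : 1 <= a -> 0 < y -> plog (a * y) <= ln a + plog y.
Proof.
move=> a1 y0; have la : 0 <= ln a.
  apply: Rnot_lt_le => /exp_increasing; rewrite exp_ln ?exp_0; lra.
apply: Rmax_lub; last by have := plog_ge1 y; lra.
by rewrite ln_mult; [have := ln_le_plog y; lra | lra | lra].
Qed.

Lemma INR_expn m k : INR (m ^ k) = INR m ^ k.
Proof. by rewrite RpowE !INRE natrX. Qed.

Lemma exp_half_le_pow2 t : exp (INR t / 2) <= INR (2 ^ t).
Proof.
rewrite INR_expn -(Rpower_pow t 2) /Rpower; last lra.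
by apply: exp_le; have := ln_lt_2; have := pos_INR t; nra.
Qed.

Lemma lt_pow2_of_plog y t : 0 < y -> 2 * plog y < INR t -> y < INR (2 ^ t).
Proof.
move=> y0 yt; apply: Rle_lt_trans (le_exp_plog y0) _.
apply: Rlt_le_trans (exp_half_le_pow2 t); apply: exp_increasing; lra.
Qed.

Lemma lt_tower_plog3 x J : 0 < x -> 6 * plog (plog (plog x)) < INR J ->
  x < INR (2 ^ (2 ^ (2 ^ J))).
Proof.
set L1 := plog x; set L2 := plog L1; set L3 := plog L2 => x0 JL3.
have L1g : 1 <= L1 := plog_ge1 x.
have L2g : 1 <= L2 := plog_ge1 L1.
have L3g : 1 <= L3 := plog_ge1 L2.
have [ln2_gt ln2_lt1] : / 2 < ln 2 < 1.
  split; first exact: ln_lt_2.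
  rewrite -(ln_exp 1); apply: ln_increasing; first lra.
  by have := exp_ineq1 1 R1_neq_R0; lra.
have ln4 : ln 4 = 2 * ln 2 by rewrite (_ : 4 = 2 * 2) ?ln_mult; lra.
have step1 : 4 * L2 < INR (2 ^ J).
  apply: lt_pow2_of_plog; first lra.
  by have := @plog_mul_le 4 L2; rewrite -/L3; lra.
have step2 : 2 * L1 < INR (2 ^ (2 ^ J)).
  apply: lt_pow2_of_plog; first lra.
  by have := @plog_mul_le 2 L1; rewrite -/L2; lra.
exact: lt_pow2_of_plog.
Qed.

Lemma Rpower_le_of_le_pow x y e k : 1 <= x -> 0 < y -> x <= y ^ k.+1 ->
  e <= / INR k.+1 -> Rpower x e <= y.
Proof.
move=> x1 y0 xy ek; have k0 : 0 < INR k.+1 by apply: lt_0_INR; lia.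
apply: Rle_trans (Rle_Rpower _ _ _ x1 ek) _.
apply: Rle_trans (_ : Rpower (y ^ k.+1) (/ INR k.+1) <= y).
  by apply: Rle_Rpower_l; [apply/Rlt_le/Rinv_0_lt_compat | lra].
rewrite -(Rpower_pow k.+1 y y0) Rpower_mult Rinv_r ?Rpower_1 //; first exact: Rle_refl.
lra.
Qed.

Lemma exists_nat_between y : 0 < y -> exists J : nat, y < INR J <= y + 1.
Proof.
move=> y0; have [up_gt up_le] := archimed y.
have z0 : Z.lt 0 (up y) by apply: lt_0_IZR; lra.
exists (Z.to_nat (up y)); rewrite INR_IZR_INZ Z2Nat.id; lra || lia.
Qed.

(* With 6 L3 < J <= 6 L3 + 1 and L3 >= 1, we get J + 1 <= 8 L3. *)
Theorem mainTheorem7 :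
  exists c K : R, 0 < c /\ 0 < K /\
    forall n : nat, Peano.lt 0 n ->
      exists m : nat, Nat.divide m n /\
        Rpower (INR n) (c / plog (plog (plog (INR n)))) <= INR m /\
        INR (sigma_div m) <= K * INR m.
Proof.
exists (/ 8), (exp (10%:R)%R); split; first lra; split; first exact: exp_pos.
move=> n /ssrnat.ltP n0; set L3 := plog (plog (plog (INR n))).
have L3g : 1 <= L3 := plog_ge1 _.
have [J [JL3 JL3']] := exists_nat_between (ltac:(lra) : 0 < 6 * L3).
have nR : 0 < INR n by apply/lt_0_INR/ssrnat.ltP.
have /INR_lt/ssrnat.ltP nJ := lt_tower_plog3 nR JL3.
have [m [mn nm sigma_le]] := exists_dvdn_pow_ge_sigman_le n0 nJ.
have m0 : (0 < m)%N := dvdn_gt0 n0 mn.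
exists m; split; first by case/dvdnP: mn => k ->; exists k.
split; last by rewrite sigma_divE // !INRE; apply/RleP.
apply: (Rpower_le_of_le_pow (k := J)).
- by apply: (le_INR 1); apply/ssrnat.leP.
- exact/lt_0_INR/ssrnat.ltP.
- by rewrite -INR_expn; apply/le_INR/ssrnat.leP.
- rewrite S_INR /Rdiv -Rinv_mult; apply: Rinv_le_contravar; lra.
Qed.
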